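(* For every $l\in\mathbb{N}$ and every $a_1,\dots,a_l\in\mathbb{Q}^*$ there exists $d\in\mathbb{Q}^*$ such that $F_d(\mathbb{Q})\not\subseteq\Omega_d$ and $da_j\notin(\mathbb{Q}^* )^2$ for all $j=1,\dots,l$.
   Context: For $d\in\mathbb{Q}^*$, $F_d\subset\mathbb{P}^3_{\mathbb{Q}}$ is the surface $x^4+d^2y^4-d^2z^4-w^4=0$, and $\Omega_d=\{[x:y:z:w]: xyzw=0\}\cup L_d$, where $L_d$ is the union of the $48$ lines (over $\overline{\mathbb{Q}}$) contained in $F_d$. *)

From HB Require Import structures.
From mathcomp Require Import all_boot all_order all_algebra all_field.
Set Implicit Arguments. Unset Strict Implicit. Unset Printing Implicit Defensive.
Import Order.TTheory GRing.Theory Num.Theory.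
Local Open Scope ring_scope.

(* Homogeneous coordinates [x:y:z:w] are row vectors of length 4. *)
Definition c0 : 'I_4 := @Ordinal 4 0 isT.
Definition c1 : 'I_4 := @Ordinal 4 1 isT.
Definition c2 : 'I_4 := @Ordinal 4 2 isT.
Definition c3 : 'I_4 := @Ordinal 4 3 isT.

Definition Fform (R : comRingType) (d : R) (v : 'rV[R]_4) : R :=
  v 0 c0 ^+ 4 + d ^+ 2 * v 0 c1 ^+ 4 - d ^+ 2 * v 0 c2 ^+ 4 - v 0 c3 ^+ 4.

(* Rational points of F_d, given by nonzero representatives. *)
Definition on_Fd_rat (d : rat) (v : 'rV[rat]_4) : Prop :=
  v != 0 /\ Fform d v = 0.

(* A projective line of P^3 over Qbar (= algC) is spanned by two linearly
   independent vectors u, v; it is contained in F_d iff the form vanishes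
   on every point s u + t v. *)
Definition line_in_Fd (d : rat) (u v : 'rV[algC]_4) : Prop :=
  (forall a b : algC, a *: u + b *: v = 0 -> a = 0 /\ b = 0) /\
  (forall s t : algC, Fform (ratr d) (s *: u + t *: v) = 0).

Definition in_Ld (d : rat) (p : 'rV[rat]_4) : Prop :=
  exists u v : 'rV[algC]_4, line_in_Fd d u v /\
    exists s t : algC, map_mx ratr p = s *: u + t *: v.

Definition in_Omega (d : rat) (p : 'rV[rat]_4) : Prop :=
  p 0 c0 * p 0 c1 * p 0 c2 * p 0 c3 = 0 \/ in_Ld d p.

From HB Require Import structures.
From mathcomp Require Import all_boot all_order all_algebra all_field.
From mathcomp Require Import ring lra.

(* Take a prime p exceeding 4 and every numerator and denominator of the a_j,
   and d = 4p(p^4+1).  Since (p^4+2p^2-1)^4 - (p^4-2p^2-1)^4 = d^2 (p^4-1),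
   the point (pd : p^4-2p^2-1 : p^4+2p^2-1 : d) lies on F_d, with no zero
   coordinate.  If a line through a point x of a diagonal quartic
   sum_i c_i x_i^4 = 0 has direction w, expanding in the line parameter shows
   that the weights c_i x_i^4 have vanishing moments of order 0..3 at the nodes
   w_i / x_i; so every fibre of the nodes carries total weight zero.  For our
   point no proper subfamily of the weights sums to zero, hence w is
   proportional to x: no line of F_d passes through it.  Finally p divides d
   exactly once and is prime to the a_j, so d a_j has odd p-adic valuation and
   is not a square. *)

Set Implicit Arguments.
Unset Strict Implicit.
Unset Printing Implicit Defensive.

Import Order.TTheory GRing.Theory Num.Theory.
Local Open Scope ring_scope.

Definition zero_subsum_trivial (V : zmodType) (n : nat) (a : 'I_n -> V) :=
  forall S : {set 'I_n}, \sum_(i in S) a i = 0 -> S = set0 \/ S = setT.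

Lemma zero_subsum_trivial_inj (U V : zmodType) (f : {additive U -> V})
    (n : nat) (a : 'I_n -> U) (b : 'I_n -> V) :
  injective f -> (forall i, b i = f (a i)) ->
  zero_subsum_trivial a -> zero_subsum_trivial b.
Proof.
move=> f_inj bE a_triv S; rewrite (eq_bigr _ (fun i _ => bE i)) -raddf_sum.
by rewrite -(raddf0 f) => /f_inj; exact: a_triv.
Qed.

Section Moments.

Variables (K : idomainType) (n : nat) (a u : 'I_n -> K).
Hypothesis moments_eq0 : forall k, (k < n)%N -> \sum_i a i * u i ^+ k = 0.

Lemma moments_horner (q : {poly K}) :
  (size q <= n)%N -> \sum_i a i * q.[u i] = 0.
Proof.
move=> q_small; under eq_bigr => i _ do rewrite horner_coef big_distrr.
rewrite exchange_big big1 // => k _.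
rewrite (eq_bigr (fun i => q`_k * (a i * u i ^+ k))) => [|i _]; last exact: mulrCA.
by rewrite -big_distrr /= moments_eq0 ?mulr0 // (leq_trans _ q_small).
Qed.

Lemma moments_fiber_sum (v : K) : \sum_(i | u i == v) a i = 0.
Proof.
case: (pickP (fun i => u i == v)) => [i0 ui0|no_v]; last by rewrite big_pred0.
pose others := enum [pred j | u j != v].
pose q := \prod_(j <- others) ('X - (u j)%:P).
have q_small : (size q <= n)%N.
  rewrite size_prod_XsubC -cardE -[n in (_ <= n)%N]card_ord -(cardC [pred j | u j != v]).
  by rewrite -addn1 leq_add2l; apply/card_gt0P; exists i0; rewrite !inE ui0.
have qv_neq0 : q.[v] != 0.
  rewrite horner_prod prodf_seq_neq0; apply/allP => j; rewrite mem_enum inE => ujv.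
  by rewrite hornerXsubC subr_eq0 eq_sym.
have others0 : \sum_(i | u i != v) a i * q.[u i] = 0.
  apply: big1 => i uiv; rewrite horner_prod (bigD1_seq i) ?enum_uniq ?mem_enum //=.
  by rewrite hornerXsubC subrr mul0r mulr0.
have fiber : \sum_(i | u i == v) a i * q.[u i] = (\sum_(i | u i == v) a i) * q.[v].
  by rewrite big_distrl; apply: eq_bigr => i /eqP ->.
have := moments_horner q_small; rewrite (bigID (fun i => u i == v)) /= others0 addr0 fiber.
by move/eqP; rewrite mulf_eq0 (negPf qv_neq0) orbF => /eqP.
Qed.

Lemma moments_nodes_eq : zero_subsum_trivial a -> forall i j, u i = u j.
Proof.
move=> a_triv i j.
have fiber_sum : \sum_(k in [set k | u k == u j]) a k = 0.
  by rewrite (eq_bigl (fun k => u k == u j)) ?moments_fiber_sum // => k; rewrite inE.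
case: (a_triv _ fiber_sum) => [/setP/(_ j)|fiber_full]; first by rewrite !inE eqxx.
by apply/eqP; have := in_setT i; rewrite -fiber_full inE.
Qed.

End Moments.

Lemma pchar0_natr_inj (R : idomainType) :
  [pchar R] =i pred0 -> injective (fun k : nat => k%:R : R).
Proof.
move/(pcharf0P R)=> R0 m n; wlog le_mn : m n / (m <= n)%N => [wlog_mn mn|].
  by case: (leqP m n) => [/wlog_mn -> // | /ltnW/wlog_mn/(_ (esym mn))].
move/eqP; rewrite eq_sym -subr_eq0 -natrB // R0 subn_eq0 => le_nm.
by apply/eqP; rewrite eqn_leq le_mn.
Qed.

Lemma pchar0_poly_fun_eq0 (K : idomainType) (m : nat) (f : nat -> K) :
  [pchar K] =i pred0 -> (forall b, \sum_(k < m) f k * b ^+ k = 0) ->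
  forall k, (k < m)%N -> f k = 0.
Proof.
move=> K0 f_roots k lt_km; pose E := \poly_(i < m) f i.
have E0 : E = 0.
  apply: (@roots_geq_poly_eq0 _ E [seq i%:R | i <- iota 0 m]).
  - by apply/allP => _ /mapP[i _ ->]; rewrite /root horner_poly f_roots.
  - by rewrite map_inj_uniq ?iota_uniq //; exact: pchar0_natr_inj.
  - by rewrite size_map size_iota size_poly.
by have := congr1 (fun q : {poly K} => q`_k) E0; rewrite coef_poly lt_km coef0.
Qed.

Definition diag_form (R : pzRingType) (n e : nat) (c : 'I_n -> R)
    (x : 'rV[R]_n) : R :=
  \sum_i c i * x 0 i ^+ e.

Lemma diag_form_lineE (R : comPzRingType) (n e : nat) (c : 'I_n -> R)
    (p w : 'rV[R]_n) (b : R) :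
  diag_form e c (p + b *: w) =
  \sum_(k < e.+1) (\sum_i c i * (p 0 i ^+ (e - k) * w 0 i ^+ k)) *+ 'C(e, k) * b ^+ k.
Proof.
rewrite /diag_form; under eq_bigr => i _ do rewrite !mxE exprDn big_distrr.
rewrite exchange_big; apply: eq_bigr => k _.
rewrite /= -sumrMnl mulr_suml; apply: eq_bigr => i _.
by rewrite exprMn; ring.
Qed.

Lemma diag_form_line_ratio_eq (K : fieldType) (n e : nat) (c : 'I_n -> K)
    (p w : 'rV[K]_n) :
  [pchar K] =i pred0 -> (n <= e.+1)%N -> (forall i, p 0 i != 0) ->
  zero_subsum_trivial (fun i => c i * p 0 i ^+ e) ->
  (forall b, diag_form e c (p + b *: w) = 0) ->
  forall i j, w 0 i / p 0 i = w 0 j / p 0 j.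
Proof.
move=> K0 le_ne p_neq0 weights_triv line0.
apply: (moments_nodes_eq _ weights_triv) => k lt_kn.
have le_ke : (k <= e)%N by rewrite -ltnS (leq_trans lt_kn).
pose f k := (\sum_i c i * (p 0 i ^+ (e - k) * w 0 i ^+ k)) *+ 'C(e, k).
have f0 : forall k, (k < e.+1)%N -> f k = 0.
  by apply: (@pchar0_poly_fun_eq0 _ e.+1 f K0) => b; rewrite -[RHS](line0 b) diag_form_lineE.
have := f0 k le_ke; rewrite /f -mulr_natr => /eqP.
rewrite mulf_eq0 ((pcharf0P K).1 K0) eqn0Ngt bin_gt0 le_ke orbF => /eqP sum0.
rewrite -[RHS]sum0; apply: eq_bigr => i _; have pi0 := p_neq0 i.
by rewrite -{1}(subnK le_ke) exprD expr_div_n; field; rewrite expf_neq0.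
Qed.

Lemma span2_line_through (K : fieldType) (V : lmodType K) (u v p : V) (s t : K) :
  (forall a b, a *: u + b *: v = 0 -> a = 0 /\ b = 0) -> p = s *: u + t *: v ->
  exists w, (forall k, w != k *: p) /\
    (forall b, exists s' t', p + b *: w = s' *: u + t' *: v).
Proof.
move=> uv_indep ->; have [-> | s_neq0] := eqVneq s 0.
  exists u; split=> [k|b]; last by exists b, t; rewrite scale0r add0r addrC.
  apply/eqP; rewrite scale0r add0r scalerA => u_eq.
  have [] := uv_indep 1 (- (k * t)); first by rewrite scale1r scaleNr {1}u_eq subrr.
  by move=> /eqP; rewrite oner_eq0.
exists v; split=> [k|b]; last by exists s, (t + b); rewrite scalerDl addrA.
apply/eqP; rewrite scalerDr !scalerA => v_eq.
have [] := uv_indep (k * s) (k * t - 1).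
  by rewrite scalerBl scale1r addrA -v_eq subrr.
move=> /eqP; rewrite mulf_eq0 (negPf s_neq0) orbF => /eqP ->.
by rewrite mul0r sub0r => /eqP; rewrite oppr_eq0 oner_eq0.
Qed.

Lemma mul_odd_logn_not_sqr (p D : nat) (a : rat) :
  prime p -> (0 < D)%N -> odd (logn p D) ->
  ~~ (p %| `|numq a|)%N -> ~~ (p %| `|denq a|)%N ->
  ~ exists q, D%:R * a = q ^+ 2.
Proof.
move=> p_pr D_gt0 odd_D pA pB [q Dq].
have a_neq0 : a != 0 by apply: contraNneq pA => ->.
have q_neq0 : q != 0.
  by apply: contra_eq_neq Dq => ->; rewrite expr0n mulf_neq0 ?pnatr_eq0 -?lt0n.
have int_eq : D%:Z * numq a * denq q ^+ 2 = numq q ^+ 2 * denq a.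
  apply/eqP; rewrite -(eqr_int rat) !expr2 !intrM -!expr2 !numqE.
  by rewrite exprMn -Dq; apply/eqP; ring.
have nat_eq := congr1 absz int_eq; rewrite !abszM /= in nat_eq.
have A_gt0 : (0 < `|numq a|)%N by rewrite absz_gt0 numq_eq0.
have B_gt0 : (0 < `|denq a|)%N by rewrite absz_gt0 denq_eq0.
have n_gt0 : (0 < `|numq q|)%N by rewrite absz_gt0 numq_eq0.
have m_gt0 : (0 < `|denq q|)%N by rewrite absz_gt0 denq_eq0.
have logA : logn p `|numq a| = 0 by apply: logn_coprime; rewrite prime_coprime.
have logB : logn p `|denq a| = 0 by apply: logn_coprime; rewrite prime_coprime.
move/(congr1 (logn p)): nat_eq.
rewrite !lognM ?muln_gt0 ?D_gt0 ?A_gt0 ?B_gt0 ?n_gt0 ?m_gt0 // logA logB.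
by move/(congr1 odd); rewrite !oddD !addbb odd_D.
Qed.

Lemma prime_above_prime_to_rats (m l : nat) (a : 'I_l -> rat) :
  (forall j, a j != 0) ->
  exists p, [/\ prime p, (m < p)%N &
    forall j, ~~ (p %| `|numq (a j)|)%N /\ ~~ (p %| `|denq (a j)|)%N].
Proof.
move=> a_neq0; pose N := \prod_j `|(numq (a j) * denq (a j))%R|%N.
have N_gt0 : (0 < N)%N.
  by rewrite prodn_gt0 // => j; rewrite absz_gt0 mulf_neq0 ?numq_eq0 ?denq_neq0.
have [p lt_mNp p_pr] := prime_above (m + N); exists p; split=> //.
  by apply: leq_ltn_trans lt_mNp; rewrite leq_addr.
move=> j; apply/norP; rewrite -Euclid_dvdM // -abszM; apply: contraL lt_mNp.
have dvd_N : (`|(numq (a j) * denq (a j))%R| %| N)%N by rewrite /N (bigD1 j) //= dvdn_mulr.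
move=> /dvdn_trans/(_ dvd_N)/(dvdn_leq N_gt0) le_pN.
by rewrite -leqNgt (leq_trans le_pN) ?leq_addl.
Qed.

Lemma ord4_ind (P : 'I_4 -> Prop) : P c0 -> P c1 -> P c2 -> P c3 -> forall i, P i.
Proof.
by move=> P0 P1 P2 P3 [[|[|[|[|//]]]] i_lt]; rewrite (bool_irrelevance i_lt isT).
Qed.

Lemma sum_I4 (V : nmodType) (f : 'I_4 -> V) :
  \sum_i f i = f c0 + f c1 + f c2 + f c3.
Proof.
by rewrite !big_ord_recr big_ord0 /= add0r; congr (f _ + f _ + f _ + f _); apply: val_inj.
Qed.

Lemma zero_subsum_trivial_I4 (V : zmodType) (a : 'I_4 -> V) :
  \sum_i a i = 0 -> (forall i, a i != 0) -> (forall i, i != c0 -> a c0 + a i != 0) ->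
  zero_subsum_trivial a.
Proof.
rewrite sum_I4 => sum0 a_neq0 pair_neq0.
have full (S : {set 'I_4}) : c0 \in S -> \sum_(i in S) a i = 0 -> S = setT.
  move=> S0; rewrite big_mkcond sum_I4 S0 /=.
  case S1: (c1 \in S); case S2: (c2 \in S); case S3: (c3 \in S) => /=;
    rewrite ?addr0 => /eqP; rewrite ?(negPf (a_neq0 _)) ?(negPf (pair_neq0 _ _)) //.
  - by move=> _; apply/setP; apply: ord4_ind; rewrite in_setT.
  - by move=> /eqP T0; move: sum0; rewrite T0 add0r => /eqP; rewrite (negPf (a_neq0 _)).
  - by move=> /eqP T0; move: sum0; rewrite addrAC T0 add0r => /eqP; rewrite (negPf (a_neq0 _)).
  - move=> /eqP T0; move: sum0; rewrite [a c0 + _ + _]addrAC addrAC T0 add0r.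
    by move=> /eqP; rewrite (negPf (a_neq0 _)).
move=> S sumS; have [S0 | S0] := boolP (c0 \in S); first by right; exact: full.
left; have compl_full : ~: S = setT.
  apply: full; first by rewrite in_setC.
  rewrite (eq_bigl (fun i => i \notin S)) => [|i]; last by rewrite in_setC.
  by move: sum0; rewrite -sum_I4 (bigID (mem S)) /= sumS add0r.
by rewrite -[S]setCK compl_full setCT.
Qed.

Definition Fcoef (R : pzRingType) (d : R) (i : 'I_4) : R :=
  nth 0 [:: 1; d ^+ 2; - d ^+ 2; -1] i.

Lemma FformE (R : comNzRingType) (d : R) (x : 'rV[R]_4) :
  Fform d x = diag_form 4 (Fcoef d) x.
Proof. by rewrite /Fform /diag_form sum_I4 /Fcoef /=; ring. Qed.

Lemma rmorph_Fcoef (R S : nzRingType) (f : {rmorphism R -> S}) (d : R) (i : 'I_4) :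
  f (Fcoef d i) = Fcoef (f d) i.
Proof.
by move: i; apply: ord4_ind; rewrite /Fcoef /= ?rmorphN ?rmorphXn ?rmorph1.
Qed.

Lemma Fcoef_neq0 (R : idomainType) (d : R) (i : 'I_4) : d != 0 -> Fcoef d i != 0.
Proof.
by move=> d_neq0; elim/ord4_ind: i; rewrite /Fcoef /= ?oppr_eq0 ?oner_eq0 ?expf_neq0.
Qed.

Definition witness_d (P : rat) : rat := 4 * P * (P ^+ 4 + 1).

Definition witness_pt (P : rat) : 'rV[rat]_4 :=
  \row_i nth 0 [:: P * witness_d P; P ^+ 4 - 2 * P ^+ 2 - 1;
                   P ^+ 4 + 2 * P ^+ 2 - 1; witness_d P] i.

Lemma witness_d_gt0 (P : rat) : 0 < P -> 0 < witness_d P.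
Proof. by move=> P_gt0; rewrite /witness_d !mulr_gt0 ?addr_gt0 ?exprn_gt0. Qed.

Lemma witness_d_natE (p : nat) : witness_d p%:R = (p * (4 * (p ^ 4 + 1)))%:R.
Proof. by rewrite /witness_d !natrM natrD natrX; ring. Qed.

Lemma logn_witness_d (p : nat) : prime p -> (4 < p)%N -> logn p (p * (4 * (p ^ 4 + 1))) = 1.
Proof.
move=> p_pr p_gt4; have p_gt0 := prime_gt0 p_pr.
rewrite lognM ?muln_gt0 ?addn_gt0 ?orbT // logn_prime // eqxx logn_coprime //.
rewrite coprimeMr prime_coprime // (contra (dvdn_leq _)) -?ltnNge //=.
by rewrite /coprime (expnSr p 3) gcdnMDl gcdn1.
Qed.

Lemma witness_pt_gt0 (P : rat) (i : 'I_4) : 5 <= P -> 0 < witness_pt P 0 i.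
Proof.
move=> P_ge5; have d_gt0 : 0 < witness_d P by apply: witness_d_gt0; lra.
have P2 : 25 <= P ^+ 2 by nra.
by move: i; apply: ord4_ind; rewrite mxE /=; nra.
Qed.

Lemma witness_on_Fd (P : rat) : 5 <= P -> on_Fd_rat (witness_d P) (witness_pt P).
Proof.
move=> P_ge5; split; last by rewrite /Fform !mxE /= /witness_d; ring.
by have := witness_pt_gt0 c0 P_ge5; apply: contraTneq => ->; rewrite mxE ltxx.
Qed.

Lemma witness_weights_trivial (P : rat) : 5 <= P ->
  zero_subsum_trivial (fun i => Fcoef (witness_d P) i * witness_pt P 0 i ^+ 4).
Proof.
move=> P_ge5; have P_gt0 : 0 < P by lra.
have P2 : 25 <= P ^+ 2 by nra.
have Y_gt0 : 0 < P ^+ 4 - 2 * P ^+ 2 - 1 by nra.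
have lt_dZ : P ^+ 2 * witness_d P < (P ^+ 4 + 2 * P ^+ 2 - 1) ^+ 2.
  by rewrite /witness_d; nra.
have d_gt0 := witness_d_gt0 P_gt0; have pt_gt0 i := witness_pt_gt0 i P_ge5.
apply: zero_subsum_trivial_I4.
- by rewrite -[LHS]/(diag_form 4 _ _) -FformE; case: (witness_on_Fd P_ge5).
- by move=> i; rewrite mulf_neq0 ?Fcoef_neq0 ?expf_neq0 ?gt_eqF.
move=> i; elim/ord4_ind: i; first by rewrite eqxx.
all: move=> _; rewrite /Fcoef !mxE /= mul1r.
all: move: (witness_d P) d_gt0 lt_dZ => d d_gt0 lt_dZ.
- apply/lt0r_neq0/addr_gt0; first exact/exprn_gt0/mulr_gt0.
  by apply/mulr_gt0; apply/exprn_gt0.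
- set Z := P ^+ 4 + 2 * P ^+ 2 - 1.
  have -> : (P * d) ^+ 4 + - d ^+ 2 * Z ^+ 4 = d ^+ 2 * ((P ^+ 2 * d) ^+ 2 - (Z ^+ 2) ^+ 2)
    by ring.
  have Pd_ge0 : 0 <= P ^+ 2 * d by rewrite mulr_ge0 ?exprn_ge0 ?ltW.
  apply: mulf_neq0; first exact: expf_neq0 (lt0r_neq0 d_gt0).
  by rewrite subr_eq0 (lt_eqF (ltrXn2r 2 Pd_ge0 lt_dZ)).
- have lt_dPd : d < P * d by rewrite ltr_pMl; lra.
  by rewrite mulN1r subr_eq0 (gt_eqF (ltrXn2r 4 (ltW d_gt0) lt_dPd)).
Qed.

Lemma witness_notin_Ld (P : rat) : 5 <= P -> ~ in_Ld (witness_d P) (witness_pt P).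
Proof.
move=> P_ge5 [u [v [[uv_indep uv_on_F] [s [t pt_uv]]]]].
have [w [w_not_prop w_line]] := span2_line_through uv_indep pt_uv.
set p := map_mx ratr (witness_pt P) in w_not_prop w_line.
have p_neq0 i : p 0 i != 0 by rewrite mxE fmorph_eq0 gt_eqF ?witness_pt_gt0.
have weights : zero_subsum_trivial (fun i => Fcoef (ratr (witness_d P)) i * p 0 i ^+ 4).
  apply: (@zero_subsum_trivial_inj _ _ ratr _ _ _ _ _ (witness_weights_trivial P_ge5)) => [|i].
    exact: fmorph_inj.
  by rewrite [RHS]rmorphM rmorph_Fcoef mxE rmorphXn.
have on_line b : diag_form 4 (Fcoef (ratr (witness_d P))) (p + b *: w) = 0.
  by have [s' [t' ->]] := w_line b; rewrite -FformE uv_on_F.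
have ratio := diag_form_line_ratio_eq Cpchar (leqnSn 4) p_neq0 weights on_line.
move/eqP: (w_not_prop (w 0 c0 / p 0 c0)); apply; apply/rowP => i.
by rewrite mxE -(ratio i c0) divfK.
Qed.

Lemma witness_notin_Omega (P : rat) : 5 <= P -> ~ in_Omega (witness_d P) (witness_pt P).
Proof.
move=> P_ge5 [|]; last exact: witness_notin_Ld.
by apply/eqP; rewrite !mulf_neq0 ?gt_eqF ?witness_pt_gt0.
Qed.

Theorem lemma5p5 (l : nat) (a : 'I_l -> rat) (ha : forall j, a j != 0) :
  exists d : rat, d != 0 /\
    (exists p : 'rV[rat]_4, on_Fd_rat d p /\ ~ in_Omega d p) /\
    (forall j : 'I_l, ~ (exists q : rat, d * a j = q ^+ 2)).
Proof.
have [p [p_pr p_gt4 p_prime_to_a]] := prime_above_prime_to_rats 4 ha.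
have P_ge5 : 5 <= p%:R :> rat by rewrite ler_nat.
exists (witness_d p%:R); split; first by rewrite gt_eqF ?witness_d_gt0 ?ltr0n ?prime_gt0.
split; first by exists (witness_pt p%:R); split; [exact: witness_on_Fd | exact: witness_notin_Omega].
move=> j; have [pA pB] := p_prime_to_a j; rewrite witness_d_natE.
apply: mul_odd_logn_not_sqr pA pB => //; last by rewrite logn_witness_d.
by rewrite !muln_gt0 prime_gt0 ?addn1.
Qed.
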